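(* In the setting of the context, suppose $\mathcal G_{el}$ is connected and for every $i\in\mathcal D$ the gains satisfy $k^C_{1,i}<1$, $k^C_{2,i}<R^C_{ti}$, $k^C_{3,i}>0$, $k^V_{1,i}<1$, $k^V_{2,i}<R^V_{ti}$, $0<k^V_{3,i}<\frac{1}{L^V_{ti}}(k^V_{1,i}-1)(k^V_{2,i}-R^V_{ti})$. Then the origin of the linear system $\dot{\mathbf x}=\mathbf F\mathbf x$, $\mathbf x\in\mathbb{R}^{5N}$, is asymptotically stable.
   Context: Let $N\ge1$, $\mathcal D=\{1,\dots,N\}$, $\mathcal G_{el}$ an undirected graph on $\mathcal D$ with neighbor sets $\mathcal N_i$; for each $i$ let $C_{ti},L^C_{ti},R^C_{ti},L^V_{ti},R^V_{ti},R_{Li}>0$ and for each edge $R_{ij}=R_{ji}>0$. Let $$F_i=\begin{bmatrix}0&\frac{1}{C_{ti}}&0&\frac{1}{C_{ti}}&0\\ \frac{k^C_{1,i}-1}{L^C_{ti}}&\frac{k^C_{2,i}-R^C_{ti}}{L^C_{ti}}&\frac{k^C_{3,i}}{L^C_{ti}}&0&0\\ 0&-1&0&0&0\\ \frac{k^V_{1,i}-1}{L^V_{ti}}&0&0&\frac{k^V_{2,i}-R^V_{ti}}{L^V_{ti}}&\frac{k^V_{3,i}}{L^V_{ti}}\\ -1&0&0&0&0\end{bmatrix},$$ $e_1=(1,0,0,0,0)^T$, and let $\mathbf F\in\mathbb{R}^{5N\times5N}$ have $(i,i)$ block $F_i-\Big(\frac{1}{R_{Li}C_{ti}}+\sum_{j\in\mathcal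 N_i}\frac{1}{R_{ij}C_{ti}}\Big)e_1e_1^T$ and $(i,j)$ block ($j\ne i$) equal to $\frac{1}{R_{ij}C_{ti}}e_1e_1^T$ if $j\in\mathcal N_i$, $0$ otherwise. (This is the closed-loop dynamics, with exogenous inputs set to zero, of a cluster of $N$ DC microgrids, each with state: bus voltage, current-controlled converter filter current, its error integrator, voltage-controlled converter filter current, its error integrator.) *)

From Stdlib Require Import Reals Lra Lia Relations.
Open Scope R_scope.

Fixpoint sumR (n : nat) (f : nat -> R) : R :=
  match n with
  | O => 0
  | S m => sumR m f + f m
  end.

(* Nodes are 0,...,N-1 (the paper's 1,...,N shifted by one).
   The graph is given by a boolean adjacency adj. *)
Definition is_undirected_graph (N : nat) (adj : nat -> nat -> bool) : Prop :=
  (forall i j, adj i j = true -> (i < N)%nat /\ (j < N)%nat) /\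
  (forall i j, adj i j = adj j i) /\
  (forall i, adj i i = false).

Definition edge_rel (N : nat) (adj : nat -> nat -> bool) : relation nat :=
  fun a b => (a < N)%nat /\ (b < N)%nat /\ adj a b = true.

Definition graph_connected (N : nat) (adj : nat -> nat -> bool) : Prop :=
  forall i j, (i < N)%nat -> (j < N)%nat -> clos_refl_trans nat (edge_rel N adj) i j.

Definition Floc (Ct LCt RCt LVt RVt kC1 kC2 kC3 kV1 kV2 kV3 : R) (a b : nat) : R :=
  match a, b with
  | 0%nat, 1%nat => 1 / Ct
  | 0%nat, 3%nat => 1 / Ct
  | 1%nat, 0%nat => (kC1 - 1) / LCt
  | 1%nat, 1%nat => (kC2 - RCt) / LCt
  | 1%nat, 2%nat => kC3 / LCt
  | 2%nat, 1%nat => -1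
  | 3%nat, 0%nat => (kV1 - 1) / LVt
  | 3%nat, 3%nat => (kV2 - RVt) / LVt
  | 3%nat, 4%nat => kV3 / LVt
  | 4%nat, 0%nat => -1
  | _, _ => 0
  end.

Definition Fmat (N : nat) (adj : nat -> nat -> bool) (Rl : nat -> nat -> R)
  (Ct LCt RCt LVt RVt RL kC1 kC2 kC3 kV1 kV2 kV3 : nat -> R) (k l : nat) : R :=
  let i := (k / 5)%nat in let a := (k mod 5)%nat in
  let j := (l / 5)%nat in let b := (l mod 5)%nat in
  if Nat.eqb i j then
    Floc (Ct i) (LCt i) (RCt i) (LVt i) (RVt i)
         (kC1 i) (kC2 i) (kC3 i) (kV1 i) (kV2 i) (kV3 i) a b
    - (if andb (Nat.eqb a 0) (Nat.eqb b 0) then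
         1 / (RL i * Ct i)
         + sumR N (fun m => if adj i m then 1 / (Rl i m * Ct i) else 0)
       else 0)
  else if andb (andb (Nat.eqb a 0) (Nat.eqb b 0)) (adj i j) then
    1 / (Rl i j * Ct i)
  else 0.

Definition vnorm (n : nat) (v : nat -> R) : R := sqrt (sumR n (fun k => v k ^ 2)).

Definition is_solution (n : nat) (A : nat -> nat -> R) (x : R -> nat -> R) : Prop :=
  forall t k, (k < n)%nat ->
    derivable_pt_lim (fun s => x s k) t (sumR n (fun l => A k l * x t l)).

Definition origin_asymptotically_stable (n : nat) (A : nat -> nat -> R) : Prop :=
  (forall eps, 0 < eps -> exists delta, 0 < delta /\
     forall x, is_solution n A x -> vnorm n (x 0) < delta ->
       forall t, 0 <= t -> vnorm n (x t) < eps) /\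
  (exists delta, 0 < delta /\
     forall x, is_solution n A x -> vnorm n (x 0) < delta ->
       forall eps, 0 < eps -> exists T, forall t, T <= t -> vnorm n (x t) < eps).

(* Write the state of a microgrid as (V, I, p, J, q): bus voltage, current-controlled filter
   current and its integrator, voltage-controlled filter current and its integrator.  Each
   microgrid gets a quadratic Lyapunov function: an energy-like diagonal part, written in the
   coordinate z = (RV - kV2) J - kV3 q in which it decouples, plus small cross terms
   -2 e LC I p - 2 f C V q.  Along an isolated block the diagonal part decreases at rate
   V^2/RL + (RC - kC2)/(1 - kC1) I^2 + z^2/voltage_margin, which leaves the integrator states
   p and q undamped; the cross terms supply that damping at a cost of order e and f.  The lines
   form a passive resistive network, so summing the local functions only adds a term of order
   f^2 q^2, absorbed for f small.  The sum W is comparable to |x|^2 and W' <= -eta |x|^2, whence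
   (1 + eta t / M) W(x t) is nonincreasing. *)

From Stdlib Require Import Reals Lra Lia Psatz Bool.
Open Scope R_scope.

Lemma sumR_ext n f g : (forall k, (k < n)%nat -> f k = g k) -> sumR n f = sumR n g.
Proof.
  induction n as [|n IH]; intros H; simpl; [reflexivity|].
  rewrite IH by (intros; apply H; lia). now rewrite H by lia.
Qed.

Lemma sumR_le n f g : (forall k, (k < n)%nat -> f k <= g k) -> sumR n f <= sumR n g.
Proof.
  induction n as [|n IH]; intros H; simpl; [lra|].
  apply Rplus_le_compat; [apply IH; intros; apply H|apply H]; lia.
Qed.

Lemma sumR_plus n f g : sumR n (fun k => f k + g k) = sumR n f + sumR n g.
Proof. induction n as [|n IH]; simpl; [ring|]. rewrite IH; ring. Qed.

Lemma sumR_scal n c f : sumR n (fun k => c * f k) = c * sumR n f.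
Proof. induction n as [|n IH]; simpl; [ring|]. rewrite IH; ring. Qed.

Lemma sumR_zero n : sumR n (fun _ => 0) = 0.
Proof. induction n as [|n IH]; simpl; [ring|]. rewrite IH; ring. Qed.

Lemma sumR_nonneg n f : (forall k, (k < n)%nat -> 0 <= f k) -> 0 <= sumR n f.
Proof. intros H. rewrite <- (sumR_zero n). now apply sumR_le. Qed.

Lemma sumR_swap n m (h : nat -> nat -> R) :
  sumR n (fun i => sumR m (h i)) = sumR m (fun j => sumR n (fun i => h i j)).
Proof.
  induction n as [|n IH]; simpl; [now rewrite sumR_zero|].
  now rewrite IH, <- sumR_plus.
Qed.

Lemma sumR_kronecker n i g : (i < n)%nat ->
  sumR n (fun j => if Nat.eqb i j then g j else 0) = g i.
Proof.
  induction n as [|n IH]; intros Hi; [lia|]; simpl.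
  destruct (Nat.eqb_spec i n) as [->|Hne].
  - rewrite (sumR_ext _ _ (fun _ => 0)), sumR_zero; [ring|].
    intros k Hk. destruct (Nat.eqb_spec n k); [lia|reflexivity].
  - rewrite IH by lia. ring.
Qed.

Lemma sumR_add n m f : sumR (n + m) f = sumR n f + sumR m (fun k => f (n + k)%nat).
Proof.
  induction m as [|m IH]; simpl; [rewrite Nat.add_0_r; ring|].
  rewrite Nat.add_succ_r; simpl. rewrite IH; ring.
Qed.

Lemma sumR_blocks m n f :
  sumR (m * n) f = sumR n (fun i => sumR m (fun a => f (m * i + a)%nat)).
Proof.
  induction n as [|n IH]; simpl; [now rewrite Nat.mul_0_r|].
  now rewrite Nat.mul_succ_r, sumR_add, IH.
Qed.

Lemma exists_uniform_lower N (P : nat -> R -> Prop) :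
  (forall i r r', P i r -> 0 < r' <= r -> P i r') ->
  (forall i, (i < N)%nat -> exists r, 0 < r /\ P i r) ->
  exists r, 0 < r /\ forall i, (i < N)%nat -> P i r.
Proof.
  intros Hmono. induction N as [|N IH]; intros H.
  - exists 1; split; [lra|intros; lia].
  - destruct IH as [r [Hr HP]]; [intros; apply H; lia|].
    destruct (H N) as [r' [Hr' HP']]; [lia|].
    assert (Hmin : 0 < Rmin r r') by now apply Rmin_pos.
    exists (Rmin r r'); split; [exact Hmin|]. intros i Hi.
    destruct (Nat.eq_dec i N) as [->|Hne].
    + apply Hmono with r'; [exact HP'|split; [exact Hmin|apply Rmin_r]].
    + apply Hmono with r; [apply HP; lia|split; [exact Hmin|apply Rmin_l]].
Qed.

Lemma exists_uniform_upper N (P : nat -> R -> Prop) :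
  (forall i r r', P i r -> r <= r' -> P i r') ->
  (forall i, (i < N)%nat -> exists r, 0 < r /\ P i r) ->
  exists r, 0 < r /\ forall i, (i < N)%nat -> P i r.
Proof.
  intros Hmono. induction N as [|N IH]; intros H.
  - exists 1; split; [lra|intros; lia].
  - destruct IH as [r [Hr HP]]; [intros; apply H; lia|].
    destruct (H N) as [r' [Hr' HP']]; [lia|].
    exists (Rmax r r'); split; [apply Rlt_le_trans with r; [lra|apply Rmax_l]|].
    intros i Hi. destruct (Nat.eq_dec i N) as [->|Hne].
    + apply Hmono with r'; [exact HP'|apply Rmax_r].
    + apply Hmono with r; [apply HP; lia|apply Rmax_l].
Qed.

Lemma finite_choice {A : Type} (a0 : A) N (P : nat -> A -> Prop) :
  (forall i, (i < N)%nat -> exists a, P i a) ->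
  exists g : nat -> A, forall i, (i < N)%nat -> P i (g i).
Proof.
  induction N as [|N IH]; intros H.
  - exists (fun _ => a0); intros; lia.
  - destruct IH as [g Hg]; [intros; apply H; lia|].
    destruct (H N) as [a Ha]; [lia|].
    exists (fun i => if Nat.eqb i N then a else g i). intros i Hi.
    destruct (Nat.eqb_spec i N) as [->|Hne]; [exact Ha|apply Hg; lia].
Qed.

Definition sqnorm (n : nat) (y : nat -> R) : R := sumR n (fun k => y k ^ 2).

Lemma sqnorm_nonneg n y : 0 <= sqnorm n y.
Proof. apply sumR_nonneg; intros; apply pow2_ge_0. Qed.

Lemma vnorm_lt_iff n y r : 0 < r -> vnorm n y < r <-> sqnorm n y < r ^ 2.
Proof.
  intros Hr. unfold vnorm. fold (sqnorm n y). pose proof (sqnorm_nonneg n y).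
  rewrite <- (sqrt_pow2 r) at 1 by lra. split.
  - apply sqrt_lt_0_alt.
  - intros Hlt. apply sqrt_lt_1_alt; lra.
Qed.

Lemma lyapunov_decay (W S D : R -> R) m M eta :
  0 < m -> 0 < M -> 0 < eta ->
  (forall s, derivable_pt_lim W s (D s)) ->
  (forall s, m * S s <= W s <= M * S s) ->
  (forall s, D s <= - eta * S s) ->
  (forall s, 0 <= S s) ->
  forall t, 0 <= t -> m * S t * (1 + eta / M * t) <= M * S 0.
Proof.
  intros Hm HM Heta HD HW HDle HS t Ht.
  set (c := eta / M).
  assert (Hc : 0 < c) by (apply Rdiv_lt_0_compat; lra).
  assert (HcM : c * M = eta) by (unfold c; field; lra).
  clearbody c.
  assert (Hweighted : (1 + c * t) * W t <= W 0).
  { destruct (Req_dec t 0) as [->|Ht0]; [lra|].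
    destruct (MVT_cor2 (fun s => (1 + c * s) * W s) (fun s => c * W s + (1 + c * s) * D s) 0 t)
      as [xi [Hmvt Hxi]]; [lra| |].
    - intros s _.
      replace (c * W s + (1 + c * s) * D s) with ((0 + c * 1) * W s + (1 + c * s) * D s) by ring.
      apply (derivable_pt_lim_mult (fun s => 1 + c * s) W); [|apply HD].
      apply (derivable_pt_lim_plus (fun _ => 1) (fun s => c * s)).
      + apply derivable_pt_lim_const.
      + apply (derivable_pt_lim_scal id), derivable_pt_lim_id.
    - specialize (HW xi). specialize (HDle xi).
      pose proof (HS xi).
      assert (c * W xi <= eta * S xi) by nra.
      assert ((1 + c * xi) * D xi <= - eta * S xi).
      { assert (0 <= c * xi * (- D xi)) by (repeat apply Rmult_le_pos; nra).
        nra. }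
      simpl in Hmvt. nra. }
  destruct (HW t) as [HWt _]. destruct (HW 0) as [_ HW0]. pose proof (HS t).
  assert (0 <= c * t * (W t - m * S t)) by (repeat apply Rmult_le_pos; lra).
  nra.
Qed.

Section DecayToStability.
Variables (n : nat) (A : nat -> nat -> R) (m M c : R).
Hypotheses (Hm : 0 < m) (HM : 0 < M) (Hc : 0 < c).
Hypothesis Hdecay : forall x, is_solution n A x -> forall t, 0 <= t ->
  m * sqnorm n (x t) * (1 + c * t) <= M * sqnorm n (x 0).

Lemma stable_of_decay eps : 0 < eps -> exists delta, 0 < delta /\
  forall x, is_solution n A x -> vnorm n (x 0) < delta -> forall t, 0 <= t -> vnorm n (x t) < eps.
Proof.
  intros Heps. exists (eps * m / (m + M)).
  assert (Hdelta : 0 < eps * m / (m + M)) by (apply Rdiv_lt_0_compat; nra).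
  split; [exact Hdelta|]. intros x Hx H0 t Ht.
  apply vnorm_lt_iff in H0; [|exact Hdelta]. apply vnorm_lt_iff; [exact Heps|].
  specialize (Hdecay x Hx t Ht). pose proof (sqnorm_nonneg n (x t)).
  assert (Hsmall : M * (eps * m / (m + M)) ^ 2 <= m * eps ^ 2).
  { replace (M * (eps * m / (m + M)) ^ 2) with (m * eps ^ 2 * (m * M / ((m + M) * (m + M))))
      by (field; lra).
    assert (m * M / ((m + M) * (m + M)) <= 1).
    { apply Rmult_le_reg_r with ((m + M) * (m + M)); [nra|].
      unfold Rdiv. rewrite Rmult_assoc, Rinv_l by nra. nra. }
    assert (0 < m * eps ^ 2) by (apply Rmult_lt_0_compat; [lra|apply pow_lt; lra]).
    rewrite <- (Rmult_1_r (m * eps ^ 2)) at 2. apply Rmult_le_compat_l; lra. }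
  assert (0 <= m * sqnorm n (x t) * (c * t)) by (repeat apply Rmult_le_pos; lra).
  nra.
Qed.

Lemma attractive_of_decay : exists delta, 0 < delta /\
  forall x, is_solution n A x -> vnorm n (x 0) < delta ->
  forall eps, 0 < eps -> exists T, forall t, T <= t -> vnorm n (x t) < eps.
Proof.
  exists 1. split; [lra|]. intros x Hx H0 eps Heps.
  apply vnorm_lt_iff in H0; [|lra]. simpl in H0. pose proof (pow_lt eps 2 Heps).
  exists (M / (m * c * eps ^ 2)). intros t Ht.
  apply vnorm_lt_iff; [exact Heps|].
  assert (HT : 0 < M / (m * c * eps ^ 2))
    by (apply Rdiv_lt_0_compat; [lra|repeat apply Rmult_lt_0_compat; lra]).
  specialize (Hdecay x Hx t ltac:(lra)). pose proof (sqnorm_nonneg n (x t)).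
  assert (Hgrow : M <= m * eps ^ 2 * (c * t)).
  { replace M with (m * eps ^ 2 * c * (M / (m * c * eps ^ 2))) at 1
      by (field; repeat split; nra).
    rewrite Rmult_assoc. apply Rmult_le_compat_l; nra. }
  destruct (Rlt_or_le (sqnorm n (x t)) (eps ^ 2)) as [Hlt|Hge]; [exact Hlt|exfalso].
  assert (m * eps ^ 2 * (1 + c * t) <= m * sqnorm n (x t) * (1 + c * t)).
  { apply Rmult_le_compat_r; [nra|]. apply Rmult_le_compat_l; lra. }
  nra.
Qed.

End DecayToStability.

Lemma asymptotically_stable_of_quadratic_lyapunov n A (W DW : (nat -> R) -> R) m M eta :
  0 < m -> 0 < M -> 0 < eta ->
  (forall y, m * sqnorm n y <= W y <= M * sqnorm n y) ->
  (forall y, DW y <= - eta * sqnorm n y) ->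
  (forall x t, is_solution n A x -> derivable_pt_lim (fun s => W (x s)) t (DW (x t))) ->
  origin_asymptotically_stable n A.
Proof.
  intros Hm HM Heta HW HDW Hderiv.
  assert (Hdecay : forall x, is_solution n A x -> forall t, 0 <= t ->
            m * sqnorm n (x t) * (1 + eta / M * t) <= M * sqnorm n (x 0)).
  { intros x Hx.
    apply (lyapunov_decay (fun s => W (x s)) (fun s => sqnorm n (x s)) (fun s => DW (x s)));
      auto using sqnorm_nonneg. }
  assert (Hc : 0 < eta / M) by (apply Rdiv_lt_0_compat; lra).
  split.
  - exact (stable_of_decay n A m M (eta / M) Hm HM Hc Hdecay).
  - exact (attractive_of_decay n A m M (eta / M) Hm HM Hc Hdecay).
Qed.

Lemma young_le a b k : 0 < k -> a * b <= (k * a ^ 2 + b ^ 2 / k) / 2.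
Proof.
  intros Hk.
  assert (H : 0 <= (k * a - b) ^ 2 * / k)
    by (apply Rmult_le_pos; [apply pow2_ge_0|left; apply Rinv_0_lt_compat; lra]).
  replace ((k * a - b) ^ 2 * / k) with (k * a ^ 2 + b ^ 2 / k - 2 * (a * b)) in H by (field; lra).
  lra.
Qed.

Definition eventually_small (P : R -> Prop) : Prop :=
  exists r, 0 < r /\ forall e, 0 < e <= r -> P e.

Lemma eventually_small_and (P Q : R -> Prop) :
  eventually_small P -> eventually_small Q -> eventually_small (fun e => P e /\ Q e).
Proof.
  intros [r [Hr HP]] [r' [Hr' HQ]]. exists (Rmin r r'). split; [now apply Rmin_pos|].
  intros e He. pose proof (Rmin_l r r'). pose proof (Rmin_r r r').
  split; [apply HP|apply HQ]; lra.
Qed.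

Lemma eventually_small_mul_le a b : 0 <= a -> 0 < b -> eventually_small (fun e => e * a <= b).
Proof.
  intros Ha Hb. exists (b / (a + 1)). split; [apply Rdiv_lt_0_compat; lra|].
  intros e [He Hle]. apply Rle_trans with (b / (a + 1) * (a + 1)).
  - apply Rle_trans with (e * (a + 1)); [nra|]. apply Rmult_le_compat_r; lra.
  - right. field. lra.
Qed.

Lemma eventually_small_witness (P : R -> Prop) :
  eventually_small P -> exists e, 0 < e /\ P e.
Proof. intros [r [Hr HP]]. exists r. split; [exact Hr|]. apply HP; lra. Qed.

Lemma shear_diag_form_coercive a b c d g s k :
  0 < a -> 0 < b -> 0 < c -> 0 < d -> 0 < g -> s <> 0 ->
  exists m, 0 < m /\ forall y : nat -> R,
    m * sqnorm 5 y
    <= a * y 0%nat ^ 2 + b * y 1%nat ^ 2 + c * y 2%nat ^ 2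
       + d * (s * y 3%nat - k * y 4%nat) ^ 2 + g * y 4%nat ^ 2.
Proof.
  intros Ha Hb Hc Hd Hg Hs.
  assert (Hs2 : 0 < s ^ 2) by (rewrite <- Rsqr_pow2; now apply Rsqr_pos_lt).
  pose proof (pow2_ge_0 k).
  destruct (eventually_small_witness (fun m => m * 1 <= a /\ m * 1 <= b /\ m * 1 <= c /\
              m * 2 <= d * s ^ 2 /\ m * (s ^ 2 + 2 * k ^ 2) <= g * s ^ 2))
    as [m [Hm [Hma [Hmb [Hmc [Hmd Hmg]]]]]].
  { repeat apply eventually_small_and; apply eventually_small_mul_le; nra. }
  exists m. split; [exact Hm|]. intros y. unfold sqnorm; cbn [sumR].
  set (z := s * y 3%nat - k * y 4%nat).
  assert (Hy3 : s ^ 2 * y 3%nat ^ 2 <= 2 * z ^ 2 + 2 * k ^ 2 * y 4%nat ^ 2).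
  { pose proof (pow2_ge_0 (z - k * y 4%nat)). unfold z in *. nra. }
  clearbody z.
  pose proof (pow2_ge_0 (y 0%nat)). pose proof (pow2_ge_0 (y 1%nat)).
  pose proof (pow2_ge_0 (y 2%nat)). pose proof (pow2_ge_0 (y 4%nat)). pose proof (pow2_ge_0 z).
  assert (s ^ 2 * (m * y 0%nat ^ 2) <= s ^ 2 * (a * y 0%nat ^ 2)) by (apply Rmult_le_compat_l; nra).
  assert (s ^ 2 * (m * y 1%nat ^ 2) <= s ^ 2 * (b * y 1%nat ^ 2)) by (apply Rmult_le_compat_l; nra).
  assert (s ^ 2 * (m * y 2%nat ^ 2) <= s ^ 2 * (c * y 2%nat ^ 2)) by (apply Rmult_le_compat_l; nra).
  assert (m * 2 * z ^ 2 <= d * s ^ 2 * z ^ 2) by nra.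
  assert (m * (s ^ 2 + 2 * k ^ 2) * y 4%nat ^ 2 <= g * s ^ 2 * y 4%nat ^ 2) by nra.
  assert (m * (s ^ 2 * y 3%nat ^ 2) <= m * (2 * z ^ 2 + 2 * k ^ 2 * y 4%nat ^ 2))
    by (apply Rmult_le_compat_l; lra).
  apply Rmult_le_reg_l with (s ^ 2); [exact Hs2|]. lra.
Qed.

Lemma shear_diag_form_bounded a b c d g s k :
  0 < a -> 0 < b -> 0 < c -> 0 < d -> 0 < g ->
  exists M, 0 < M /\ forall y : nat -> R,
    a * y 0%nat ^ 2 + b * y 1%nat ^ 2 + c * y 2%nat ^ 2
    + d * (s * y 3%nat - k * y 4%nat) ^ 2 + g * y 4%nat ^ 2
    <= M * sqnorm 5 y.
Proof.
  intros Ha Hb Hc Hd Hg.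
  pose proof (pow2_ge_0 s). pose proof (pow2_ge_0 k).
  set (M := a + b + c + 2 * d * (s ^ 2 + k ^ 2) + g).
  exists M. split; [unfold M; nra|]. intros y. unfold sqnorm; cbn [sumR].
  assert (Hz : (s * y 3%nat - k * y 4%nat) ^ 2 <= 2 * s ^ 2 * y 3%nat ^ 2 + 2 * k ^ 2 * y 4%nat ^ 2)
    by (pose proof (pow2_ge_0 (s * y 3%nat + k * y 4%nat)); nra).
  pose proof (pow2_ge_0 (y 0%nat)). pose proof (pow2_ge_0 (y 1%nat)).
  pose proof (pow2_ge_0 (y 2%nat)). pose proof (pow2_ge_0 (y 3%nat)).
  pose proof (pow2_ge_0 (y 4%nat)).
  assert (d * (s * y 3%nat - k * y 4%nat) ^ 2
          <= d * (2 * s ^ 2 * y 3%nat ^ 2 + 2 * k ^ 2 * y 4%nat ^ 2))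
    by (apply Rmult_le_compat_l; lra).
  assert (a * y 0%nat ^ 2 <= M * y 0%nat ^ 2) by (apply Rmult_le_compat_r; unfold M; nra).
  assert (b * y 1%nat ^ 2 <= M * y 1%nat ^ 2) by (apply Rmult_le_compat_r; unfold M; nra).
  assert (c * y 2%nat ^ 2 <= M * y 2%nat ^ 2) by (apply Rmult_le_compat_r; unfold M; nra).
  assert (2 * d * s ^ 2 * y 3%nat ^ 2 <= M * y 3%nat ^ 2)
    by (apply Rmult_le_compat_r; unfold M; nra).
  assert ((2 * d * k ^ 2 + g) * y 4%nat ^ 2 <= M * y 4%nat ^ 2)
    by (apply Rmult_le_compat_r; unfold M; nra).
  lra.
Qed.

Section Block.
Variables C LC RC LV RV RL kC1 kC2 kC3 kV1 kV2 kV3 : R.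

(* One microgrid, including the load on its bus, driven by the current u that the lines
   inject into the bus. *)
Definition block_rhs (u : R) (y : nat -> R) (a : nat) : R :=
  sumR 5 (fun b => Floc C LC RC LV RV kC1 kC2 kC3 kV1 kV2 kV3 a b * y b)
  + (if Nat.eqb a 0 then (u - y 0%nat / RL) / C else 0).

Definition voltage_margin : R := (1 - kV1) * (RV - kV2) - LV * kV3.

(* Polar form of the block Lyapunov function.  The diagonal coefficients are chosen so that
   all cross terms between V, I and J cancel in its derivative (lyap_form_rhs0_expand). *)
Definition lyap_form (e f : R) (y w : nat -> R) : R :=
  C * y 0%nat * w 0%nat + LC / (1 - kC1) * y 1%nat * w 1%nat
  + kC3 / (1 - kC1) * y 2%nat * w 2%nat
  + LV / (voltage_margin * (RV - kV2))
      * ((RV - kV2) * y 3%nat - kV3 * y 4%nat) * ((RV - kV2) * w 3%nat - kV3 * w 4%nat)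
  + kV3 / (RV - kV2) * y 4%nat * w 4%nat
  - e * LC * (y 1%nat * w 2%nat + y 2%nat * w 1%nat)
  - f * C * (y 0%nat * w 4%nat + y 4%nat * w 0%nat).

Lemma lyap_form_derivable e f (x : R -> nat -> R) (d : nat -> R) t :
  (forall a, (a < 5)%nat -> derivable_pt_lim (fun s => x s a) t (d a)) ->
  derivable_pt_lim (fun s => lyap_form e f (x s) (x s)) t (2 * lyap_form e f (x t) d).
Proof.
  intros Hx. unfold lyap_form.
  eapply (eq_ind _ (derivable_pt_lim _ t)).
  - repeat first [ apply Hx; lia | apply derivable_pt_lim_const | apply derivable_pt_lim_plus
                 | apply derivable_pt_lim_minus | apply derivable_pt_lim_mult
                 | apply derivable_pt_lim_opp ].
  - cbv beta. ring.
Qed.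

Hypotheses (HC : 0 < C) (HLC : 0 < LC) (HLV : 0 < LV) (HRL : 0 < RL).
Hypotheses (HkC1 : kC1 < 1) (HkC2 : kC2 < RC) (HkC3 : 0 < kC3)
  (HkV2 : kV2 < RV) (HkV3 : 0 < kV3)
  (HkV3_lt : kV3 < 1 / LV * (kV1 - 1) * (kV2 - RV)).

Lemma voltage_margin_pos : 0 < voltage_margin.
Proof.
  unfold voltage_margin.
  apply Rmult_lt_compat_l with (r := LV) in HkV3_lt; [|exact HLV].
  replace (LV * (1 / LV * (kV1 - 1) * (kV2 - RV))) with ((1 - kV1) * (RV - kV2)) in HkV3_lt
    by (field; lra).
  lra.
Qed.

Lemma lyap_form_rhs_input e f u y :
  lyap_form e f y (block_rhs u y) = lyap_form e f y (block_rhs 0 y) + (y 0%nat - f * y 4%nat) * u.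
Proof.
  pose proof voltage_margin_pos.
  unfold lyap_form, block_rhs. cbn. field. repeat split; lra.
Qed.

Lemma lyap_form_diag_expand y :
  lyap_form 0 0 y y
  = C * y 0%nat ^ 2 + LC / (1 - kC1) * y 1%nat ^ 2 + kC3 / (1 - kC1) * y 2%nat ^ 2
    + LV / (voltage_margin * (RV - kV2)) * ((RV - kV2) * y 3%nat - kV3 * y 4%nat) ^ 2
    + kV3 / (RV - kV2) * y 4%nat ^ 2.
Proof. unfold lyap_form. ring. Qed.

Lemma lyap_form_diag_equiv :
  exists m M, 0 < m /\ 0 < M /\ forall y, m * sqnorm 5 y <= lyap_form 0 0 y y <= M * sqnorm 5 y.
Proof.
  pose proof voltage_margin_pos.
  assert (Hd : 0 < LV / (voltage_margin * (RV - kV2)))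
    by (apply Rdiv_lt_0_compat; [|apply Rmult_lt_0_compat]; lra).
  assert (HP : 0 < LC / (1 - kC1)) by (apply Rdiv_lt_0_compat; lra).
  assert (HQ : 0 < kC3 / (1 - kC1)) by (apply Rdiv_lt_0_compat; lra).
  assert (Hkap : 0 < kV3 / (RV - kV2)) by (apply Rdiv_lt_0_compat; lra).
  destruct (shear_diag_form_coercive _ _ _ _ _ (RV - kV2) kV3 HC HP HQ Hd Hkap ltac:(lra))
    as [m [Hm Hlow]].
  destruct (shear_diag_form_bounded _ _ _ _ _ (RV - kV2) kV3 HC HP HQ Hd Hkap) as [M [HM Hup]].
  exists m, M. split; [exact Hm|]. split; [exact HM|].
  intros y. rewrite lyap_form_diag_expand. split; [apply Hlow|apply Hup].
Qed.

Lemma lyap_form_near_diag :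
  eventually_small (fun e => eventually_small (fun f => forall y,
    lyap_form 0 0 y y / 2 <= lyap_form e f y y <= 3 / 2 * lyap_form 0 0 y y)).
Proof.
  pose proof voltage_margin_pos.
  set (P := LC / (1 - kC1)). set (Q := kC3 / (1 - kC1)). set (kap := kV3 / (RV - kV2)).
  set (c := LV / (voltage_margin * (RV - kV2))).
  assert (HP : 0 < P) by (apply Rdiv_lt_0_compat; lra).
  assert (HQ : 0 < Q) by (apply Rdiv_lt_0_compat; lra).
  assert (Hkap : 0 < kap) by (apply Rdiv_lt_0_compat; lra).
  assert (Hc : 0 < c) by (apply Rdiv_lt_0_compat; [|apply Rmult_lt_0_compat]; lra).
  destruct (eventually_small_and _ _ (eventually_small_mul_le (2 * LC) P ltac:(lra) HP)
                                     (eventually_small_mul_le (2 * LC) Q ltac:(lra) HQ))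
    as [re [Hre HeP]].
  exists re. split; [exact Hre|]. intros e He. destruct (HeP e He) as [HeP1 HeP2].
  destruct (eventually_small_and _ _ (eventually_small_mul_le (2 * C) C ltac:(lra) HC)
                                     (eventually_small_mul_le (2 * C) kap ltac:(lra) Hkap))
    as [rf [Hrf HfP]].
  exists rf. split; [exact Hrf|]. intros f Hf. destruct (HfP f Hf) as [HfP1 HfP2].
  intros y. rewrite lyap_form_diag_expand.
  replace (lyap_form e f y y) with
    (lyap_form 0 0 y y - 2 * (e * LC) * (y 1%nat * y 2%nat) - 2 * (f * C) * (y 0%nat * y 4%nat))
    by (unfold lyap_form; ring).
  rewrite lyap_form_diag_expand. fold P Q kap c. clearbody P Q kap c.
  set (z := (RV - kV2) * y 3%nat - kV3 * y 4%nat). clearbody z.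
  assert (He0 : 0 <= e * LC) by nra. assert (Hf0 : 0 <= f * C) by nra.
  assert (0 <= e * LC * (y 1%nat - y 2%nat) ^ 2) by (apply Rmult_le_pos; [lra|apply pow2_ge_0]).
  assert (0 <= e * LC * (y 1%nat + y 2%nat) ^ 2) by (apply Rmult_le_pos; [lra|apply pow2_ge_0]).
  assert (0 <= f * C * (y 0%nat - y 4%nat) ^ 2) by (apply Rmult_le_pos; [lra|apply pow2_ge_0]).
  assert (0 <= f * C * (y 0%nat + y 4%nat) ^ 2) by (apply Rmult_le_pos; [lra|apply pow2_ge_0]).
  pose proof (pow2_ge_0 (y 0%nat)). pose proof (pow2_ge_0 (y 1%nat)).
  pose proof (pow2_ge_0 (y 2%nat)). pose proof (pow2_ge_0 (y 4%nat)).
  assert (e * LC * y 1%nat ^ 2 <= P / 2 * y 1%nat ^ 2) by (apply Rmult_le_compat_r; lra).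
  assert (e * LC * y 2%nat ^ 2 <= Q / 2 * y 2%nat ^ 2) by (apply Rmult_le_compat_r; lra).
  assert (f * C * y 0%nat ^ 2 <= C / 2 * y 0%nat ^ 2) by (apply Rmult_le_compat_r; lra).
  assert (f * C * y 4%nat ^ 2 <= kap / 2 * y 4%nat ^ 2) by (apply Rmult_le_compat_r; lra).
  assert (0 <= c * z ^ 2) by (apply Rmult_le_pos; [lra|apply pow2_ge_0]).
  split; nra.
Qed.

Lemma lyap_form_rhs0_expand e f y :
  lyap_form e f y (block_rhs 0 y)
  = - / RL * y 0%nat ^ 2 - (RC - kC2) / (1 - kC1) * y 1%nat ^ 2
    - / voltage_margin * ((RV - kV2) * y 3%nat - kV3 * y 4%nat) ^ 2
    + e * (- kC3 * y 2%nat ^ 2 + ((1 - kC1) * y 0%nat + (RC - kC2) * y 1%nat) * y 2%nat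
           + LC * y 1%nat ^ 2)
    + f * ((/ RL * y 0%nat - y 1%nat - / (RV - kV2) * ((RV - kV2) * y 3%nat - kV3 * y 4%nat))
             * y 4%nat
           - kV3 / (RV - kV2) * y 4%nat ^ 2 + C * y 0%nat ^ 2).
Proof.
  pose proof voltage_margin_pos.
  unfold lyap_form, block_rhs. cbn. unfold voltage_margin in *. field. repeat split; lra.
Qed.

(* Young's inequality on the cross terms: each coefficient is the damping of the
   diagonal part minus a perturbation of size O(e) or O(f). *)
Lemma block_dissipation_young e f y : 0 <= e -> 0 <= f ->
  lyap_form e f y (block_rhs 0 y)
  <= - (/ RL - e * (1 - kC1) ^ 2 / kC3 - f * (3 * (RV - kV2) / (2 * kV3 * RL ^ 2) + C))
         * y 0%nat ^ 2
     - ((RC - kC2) / (1 - kC1) - e * ((RC - kC2) ^ 2 / kC3 + LC)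
        - f * (3 * (RV - kV2) / (2 * kV3))) * y 1%nat ^ 2
     - e * kC3 / 2 * y 2%nat ^ 2
     - (/ voltage_margin - f * (3 / (2 * kV3 * (RV - kV2))))
         * ((RV - kV2) * y 3%nat - kV3 * y 4%nat) ^ 2
     - f * (kV3 / (RV - kV2)) / 2 * y 4%nat ^ 2.
Proof.
  intros He Hf. pose proof voltage_margin_pos.
  rewrite lyap_form_rhs0_expand.
  set (z := (RV - kV2) * y 3%nat - kV3 * y 4%nat).
  set (V := y 0%nat). set (I := y 1%nat). set (p := y 2%nat). set (q := y 4%nat).
  clearbody z V I p q.
  set (A := 1 - kC1). set (B := RC - kC2). set (kap := kV3 / (RV - kV2)).
  assert (Hkap : 0 < kap) by (apply Rdiv_lt_0_compat; lra).
  set (Wv := / RL * V - I - / (RV - kV2) * z).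
  assert (Hcur : - kC3 * p ^ 2 + (A * V + B * I) * p + LC * I ^ 2
                 <= - kC3 * p ^ 2
                    + (kC3 * p ^ 2 + (2 * A ^ 2 * V ^ 2 + 2 * B ^ 2 * I ^ 2) / kC3) / 2
                    + LC * I ^ 2).
  { pose proof (young_le p (A * V + B * I) kC3 HkC3).
    assert ((A * V + B * I) ^ 2 / kC3 <= (2 * A ^ 2 * V ^ 2 + 2 * B ^ 2 * I ^ 2) / kC3).
    { apply Rmult_le_compat_r; [left; apply Rinv_0_lt_compat; lra|].
      pose proof (pow2_ge_0 (A * V - B * I)). nra. }
    lra. }
  assert (Hvolt : Wv * q - kap * q ^ 2 + C * V ^ 2
                  <= (kap * q ^ 2
                      + 3 * ((/ RL) ^ 2 * V ^ 2 + I ^ 2 + (/ (RV - kV2)) ^ 2 * z ^ 2) / kap) / 2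
                     - kap * q ^ 2 + C * V ^ 2).
  { pose proof (young_le q Wv kap Hkap).
    assert (Wv ^ 2 / kap <= 3 * ((/ RL) ^ 2 * V ^ 2 + I ^ 2 + (/ (RV - kV2)) ^ 2 * z ^ 2) / kap).
    { apply Rmult_le_compat_r; [left; apply Rinv_0_lt_compat; lra|]. unfold Wv.
      pose proof (pow2_ge_0 (/ RL * V + I)). pose proof (pow2_ge_0 (I - / (RV - kV2) * z)).
      pose proof (pow2_ge_0 (/ RL * V + / (RV - kV2) * z)). nra. }
    lra. }
  clearbody Wv.
  apply Rmult_le_compat_l with (r := e) in Hcur; [|exact He].
  apply Rmult_le_compat_l with (r := f) in Hvolt; [|exact Hf].
  eapply Rle_trans; [apply Rplus_le_compat; [apply Rplus_le_compat_l; exact Hcur|exact Hvolt]|].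
  right. unfold kap, A, B, voltage_margin in *. field. repeat split; lra.
Qed.

Lemma block_damping_pos :
  0 < / RL / 4 /\ 0 < (RC - kC2) / (1 - kC1) / 4 /\ 0 < / voltage_margin / 2 /\
  0 < kV3 / (RV - kV2) / 2.
Proof.
  pose proof voltage_margin_pos.
  repeat split; repeat apply Rdiv_lt_0_compat; try apply Rinv_0_lt_compat; lra.
Qed.

Lemma small_current_gain :
  eventually_small (fun e =>
    e * ((1 - kC1) ^ 2 / kC3) <= / RL / 4 /\
    e * ((RC - kC2) ^ 2 / kC3 + LC) <= (RC - kC2) / (1 - kC1) / 4).
Proof.
  destruct block_damping_pos as (HiRL & HBA & _).
  pose proof (pow2_ge_0 (1 - kC1)). pose proof (pow2_ge_0 (RC - kC2)).
  assert (HiK : 0 < / kC3) by (apply Rinv_0_lt_compat; lra).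
  apply eventually_small_and; apply eventually_small_mul_le; unfold Rdiv; nra.
Qed.

Lemma small_voltage_gain D : 0 <= D ->
  eventually_small (fun f =>
    (f * (3 * (RV - kV2) / (2 * kV3 * RL ^ 2) + C) <= / RL / 4 /\
     f * (3 * (RV - kV2) / (2 * kV3)) <= (RC - kC2) / (1 - kC1) / 4) /\
    (f * (3 / (2 * kV3 * (RV - kV2))) <= / voltage_margin / 2 /\
     f * D <= kV3 / (RV - kV2) / 2)).
Proof.
  intros HD. destruct block_damping_pos as (HiRL & HBA & HiDd & Hkap).
  assert (0 < 3 * (RV - kV2) / (2 * kV3 * RL ^ 2))
    by (apply Rdiv_lt_0_compat; [lra|]; pose proof (pow_lt RL 2 HRL); nra).
  assert (0 < 3 * (RV - kV2) / (2 * kV3)) by (apply Rdiv_lt_0_compat; lra).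
  assert (0 < 3 / (2 * kV3 * (RV - kV2))) by (apply Rdiv_lt_0_compat; nra).
  repeat apply eventually_small_and; apply eventually_small_mul_le; lra.
Qed.

Lemma block_dissipation D : 0 <= D ->
  eventually_small (fun e => eventually_small (fun f => exists eta, 0 < eta /\ forall y,
    lyap_form e f y (block_rhs 0 y) + f ^ 2 * D / 2 * y 4%nat ^ 2 <= - eta * sqnorm 5 y)).
Proof.
  intros HD. destruct block_damping_pos as (HiRL & HBA & HiDd & Hkap).
  destruct small_current_gain as [re [Hre He_small]].
  exists re. split; [exact Hre|]. intros e He. destruct (He_small e He) as [He1 He2].
  destruct (small_voltage_gain D HD) as [rf [Hrf Hf_small]].
  exists rf. split; [exact Hrf|]. intros f Hf. destruct (Hf_small f Hf) as [[Hf1 Hf2] [Hf3 Hf4]].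
  destruct (shear_diag_form_coercive (/ RL / 2) ((RC - kC2) / (1 - kC1) / 2) (kC3 * e / 2)
              (/ voltage_margin / 2) (f * (kV3 / (RV - kV2)) / 4) (RV - kV2) kV3)
    as [m [Hm Hcoer]]; try nra.
  exists m. split; [exact Hm|]. intros y.
  pose proof (block_dissipation_young e f y ltac:(lra) ltac:(lra)). pose proof (Hcoer y).
  set (z := (RV - kV2) * y 3%nat - kV3 * y 4%nat) in *.
  pose proof (pow2_ge_0 (y 0%nat)). pose proof (pow2_ge_0 (y 1%nat)).
  pose proof (pow2_ge_0 (y 4%nat)). pose proof (pow2_ge_0 z).
  assert (e * ((1 - kC1) ^ 2 / kC3) * y 0%nat ^ 2 <= / RL / 4 * y 0%nat ^ 2)
    by (apply Rmult_le_compat_r; lra).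
  assert (e * ((RC - kC2) ^ 2 / kC3 + LC) * y 1%nat ^ 2
          <= (RC - kC2) / (1 - kC1) / 4 * y 1%nat ^ 2) by (apply Rmult_le_compat_r; lra).
  assert (f * (3 * (RV - kV2) / (2 * kV3 * RL ^ 2) + C) * y 0%nat ^ 2 <= / RL / 4 * y 0%nat ^ 2)
    by (apply Rmult_le_compat_r; lra).
  assert (f * (3 * (RV - kV2) / (2 * kV3)) * y 1%nat ^ 2
          <= (RC - kC2) / (1 - kC1) / 4 * y 1%nat ^ 2) by (apply Rmult_le_compat_r; lra).
  assert (f * (3 / (2 * kV3 * (RV - kV2))) * z ^ 2 <= / voltage_margin / 2 * z ^ 2)
    by (apply Rmult_le_compat_r; lra).
  assert (f * D * (f * y 4%nat ^ 2) <= kV3 / (RV - kV2) / 2 * (f * y 4%nat ^ 2))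
    by (apply Rmult_le_compat_r; [apply Rmult_le_pos|]; lra).
  lra.
Qed.

Lemma block_lyapunov D : 0 <= D ->
  exists e f,
    (exists m, 0 < m /\ forall y, m * sqnorm 5 y <= lyap_form e f y y) /\
    (exists M, 0 < M /\ forall y, lyap_form e f y y <= M * sqnorm 5 y) /\
    (exists eta, 0 < eta /\ forall y,
       lyap_form e f y (block_rhs 0 y) + f ^ 2 * D / 2 * y 4%nat ^ 2 <= - eta * sqnorm 5 y).
Proof.
  intros HD.
  destruct (eventually_small_witness _ (eventually_small_and _ _ lyap_form_near_diag
              (block_dissipation D HD))) as [e [_ [Hnear Hdiss]]].
  destruct (eventually_small_witness _ (eventually_small_and _ _ Hnear Hdiss))
    as [f [_ [Hcomp [eta [Heta Hdecr]]]]].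
  destruct lyap_form_diag_equiv as [m [M [Hm [HM Hequiv]]]].
  exists e, f. split; [|split].
  - exists (m / 2). split; [lra|]. intros y. specialize (Hequiv y). specialize (Hcomp y). lra.
  - exists (3 / 2 * M). split; [lra|]. intros y. specialize (Hequiv y). specialize (Hcomp y). lra.
  - exists eta. split; [exact Heta|exact Hdecr].
Qed.

End Block.

Lemma derivable_pt_lim_sumR n (h : nat -> R -> R) (d : nat -> R) t :
  (forall i, (i < n)%nat -> derivable_pt_lim (h i) t (d i)) ->
  derivable_pt_lim (fun s => sumR n (fun i => h i s)) t (sumR n d).
Proof.
  induction n as [|n IH]; intros H; simpl.
  - apply derivable_pt_lim_const.
  - apply (derivable_pt_lim_plus (fun s => sumR n (fun i => h i s)) (h n));
      [apply IH; intros|apply H]; auto with arith.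
Qed.

Section Network.
Variables (N : nat) (adj : nat -> nat -> bool) (Rl : nat -> nat -> R).
Hypothesis Hadj_sym : forall i j, adj i j = adj j i.
Hypothesis HRl : forall i j, adj i j = true -> Rl i j = Rl j i /\ 0 < Rl i j.

Definition line_current (v : nat -> R) (i : nat) : R :=
  sumR N (fun j => if adj i j then (v j - v i) / Rl i j else 0).

Definition conductance_degree (i : nat) : R :=
  sumR N (fun j => if adj i j then 1 / Rl i j else 0).

Lemma line_current_power v :
  sumR N (fun i => v i * line_current v i)
  = - sumR N (fun i => sumR N (fun j => if adj i j then (v j - v i) ^ 2 / Rl i j else 0)) / 2.
Proof.
  set (h := fun i j => if adj i j then v i * (v j - v i) / Rl i j else 0).
  assert (Hlhs : sumR N (fun i => v i * line_current v i) = sumR N (fun i => sumR N (h i))).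
  { apply sumR_ext; intros i _. unfold line_current. rewrite <- sumR_scal.
    apply sumR_ext; intros j _. unfold h. destruct (adj i j); unfold Rdiv; ring. }
  assert (Hpair : forall i j, h i j + h j i = - (if adj i j then (v j - v i) ^ 2 / Rl i j else 0)).
  { intros i j. unfold h. rewrite (Hadj_sym j i).
    destruct (adj i j) eqn:Eij; [|ring].
    destruct (HRl i j Eij) as [-> _]. unfold Rdiv. ring. }
  assert (Hsplit : sumR N (fun i => sumR N (fun j => h i j + h j i))
                   = sumR N (fun i => sumR N (h i)) + sumR N (fun i => sumR N (fun j => h j i))).
  { rewrite <- sumR_plus. apply sumR_ext; intros i _. apply sumR_plus. }
  assert (Hsum : sumR N (fun i => sumR N (fun j => h i j + h j i))
                 = -1 * sumR N (fun i => sumR N (fun j =>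
                          if adj i j then (v j - v i) ^ 2 / Rl i j else 0))).
  { rewrite <- sumR_scal. apply sumR_ext; intros i _. rewrite <- sumR_scal.
    apply sumR_ext; intros j _. rewrite Hpair. ring. }
  rewrite (sumR_swap N N (fun i j => h j i)) in Hsplit.
  change (sumR N (fun j => sumR N (fun i => h j i)))
    with (sumR N (fun j => sumR N (h j))) in Hsplit.
  rewrite Hlhs. lra.
Qed.

Lemma line_current_dissipative v w :
  sumR N (fun i => (v i - w i) * line_current v i)
  <= sumR N (fun i => w i ^ 2 * conductance_degree i) / 2.
Proof.
  set (S := fun i => sumR N (fun j => if adj i j then (v j - v i) ^ 2 / Rl i j else 0)).
  assert (Hw : forall i, - w i * line_current v i
                         <= / 2 * S i + / 2 * (w i ^ 2 * conductance_degree i)).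
  { intros i. unfold S, line_current, conductance_degree. rewrite <- !sumR_scal, <- sumR_plus.
    apply sumR_le; intros j _. destruct (adj i j) eqn:Eij; [|lra].
    destruct (HRl i j Eij) as [_ Hpos].
    pose proof (young_le (- w i) (v j - v i) 1 ltac:(lra)).
    apply Rmult_le_reg_r with (Rl i j); [exact Hpos|].
    replace (- w i * ((v j - v i) / Rl i j) * Rl i j) with (- w i * (v j - v i)) by (field; lra).
    replace ((/ 2 * ((v j - v i) ^ 2 / Rl i j) + / 2 * (w i ^ 2 * (1 / Rl i j))) * Rl i j)
      with (((v j - v i) ^ 2 + w i ^ 2) / 2) by (field; lra).
    lra. }
  rewrite (sumR_ext _ _ (fun i => v i * line_current v i + - w i * line_current v i))
    by (intros; ring).
  rewrite sumR_plus, line_current_power.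
  pose proof (sumR_le N _ _ (fun i _ => Hw i)) as Hsum.
  rewrite sumR_plus, !sumR_scal in Hsum. fold S. lra.
Qed.

End Network.

Definition block (x : nat -> R) (i : nat) : nat -> R := fun a => x (5 * i + a)%nat.

Lemma sqnorm_blocks N x : sqnorm (5 * N) x = sumR N (fun i => sqnorm 5 (block x i)).
Proof. apply sumR_blocks. Qed.

Section Cluster.
Variables (N : nat) (adj : nat -> nat -> bool) (Rl : nat -> nat -> R)
  (Ct LCt RCt LVt RVt RL kC1 kC2 kC3 kV1 kV2 kV3 : nat -> R).
Hypothesis Hadj_irrefl : forall i, adj i i = false.

Let F := Fmat N adj Rl Ct LCt RCt LVt RVt RL kC1 kC2 kC3 kV1 kV2 kV3.
Let Floc_at i :=
  Floc (Ct i) (LCt i) (RCt i) (LVt i) (RVt i) (kC1 i) (kC2 i) (kC3 i) (kV1 i) (kV2 i) (kV3 i).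
Let rhs_at i :=
  block_rhs (Ct i) (LCt i) (RCt i) (LVt i) (RVt i) (RL i)
    (kC1 i) (kC2 i) (kC3 i) (kV1 i) (kV2 i) (kV3 i).

Lemma Fmat_block_entry i j a b : (a < 5)%nat -> (b < 5)%nat ->
  F (5 * i + a)%nat (5 * j + b)%nat
  = (if Nat.eqb i j then Floc_at i a b else 0)
    + (if Nat.eqb a 0 && Nat.eqb b 0 then
         (if adj i j then 1 / (Rl i j * Ct i) else 0)
         - (if Nat.eqb i j then
              1 / (RL i * Ct i) + sumR N (fun m => if adj i m then 1 / (Rl i m * Ct i) else 0)
            else 0)
       else 0).
Proof.
  intros Ha Hb. unfold F, Fmat.
  assert (Hdiv : forall k c, (c < 5)%nat ->
                 ((5 * k + c) / 5 = k)%nat /\ ((5 * k + c) mod 5 = c)%nat).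
  { intros k c Hc. split.
    - rewrite Nat.mul_comm, Nat.div_add_l, Nat.div_small by lia. lia.
    - rewrite Nat.mul_comm, Nat.add_comm, Nat.Div0.mod_add. apply Nat.mod_small; lia. }
  destruct (Hdiv i a Ha) as [-> ->]. destruct (Hdiv j b Hb) as [-> ->].
  destruct (Nat.eqb_spec i j) as [<-|Hne].
  - rewrite Hadj_irrefl. destruct (Nat.eqb a 0 && Nat.eqb b 0); unfold Floc_at; ring.
  - destruct (Nat.eqb a 0 && Nat.eqb b 0); simpl; [destruct (adj i j)|]; ring.
Qed.

Lemma Fmat_mul_block x i a : (i < N)%nat -> (a < 5)%nat ->
  sumR (5 * N) (fun l => F (5 * i + a)%nat l * x l)
  = rhs_at i (line_current N adj Rl (fun j => x (5 * j)%nat) i) (block x i) a.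
Proof.
  intros Hi Ha. rewrite sumR_blocks.
  set (G := fun j => (if adj i j then 1 / (Rl i j * Ct i) else 0)
         - (if Nat.eqb i j then
              1 / (RL i * Ct i) + sumR N (fun m => if adj i m then 1 / (Rl i m * Ct i) else 0)
            else 0)).
  rewrite (sumR_ext _ _ (fun j =>
      (if Nat.eqb i j then sumR 5 (fun b => Floc_at i a b * block x i b) else 0)
      + (if Nat.eqb a 0 then G j * x (5 * j)%nat else 0))).
  2:{ intros j _. cbn [sumR]. rewrite !Fmat_block_entry by lia.
      cbn [Nat.eqb]. rewrite andb_true_r, !andb_false_r.
      unfold block, G. rewrite !Nat.add_0_r.
      destruct (Nat.eqb_spec i j) as [<-|]; [rewrite Hadj_irrefl|]; destruct (Nat.eqb a 0); ring. }
  rewrite sumR_plus, sumR_kronecker by exact Hi.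
  unfold rhs_at, block_rhs. f_equal.
  destruct (Nat.eqb a 0); [|apply sumR_zero].
  unfold G, line_current, block. rewrite Nat.add_0_r.
  set (B := 1 / (RL i * Ct i) + sumR N (fun m => if adj i m then 1 / (Rl i m * Ct i) else 0)).
  rewrite (sumR_ext _ _ (fun k => / Ct i * (if adj i k then x (5 * k)%nat / Rl i k else 0)
                                  + (if Nat.eqb i k then - B * x (5 * k)%nat else 0)))
    by (intros k _; destruct (adj i k), (Nat.eqb i k); unfold Rdiv; rewrite ?Rinv_mult; ring).
  rewrite sumR_plus, sumR_scal, sumR_kronecker by exact Hi.
  rewrite (sumR_ext _ (fun j => if adj i j then (x (5 * j)%nat - x (5 * i)%nat) / Rl i j else 0)
             (fun j => (if adj i j then x (5 * j)%nat / Rl i j else 0)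
                                  + - x (5 * i)%nat * (if adj i j then 1 / Rl i j else 0)))
    by (intros j _; destruct (adj i j); unfold Rdiv; ring).
  rewrite sumR_plus, sumR_scal.
  unfold B.
  rewrite (sumR_ext _ (fun m => if adj i m then 1 / (Rl i m * Ct i) else 0)
             (fun m => / Ct i * (if adj i m then 1 / Rl i m else 0)))
    by (intros m _; destruct (adj i m); unfold Rdiv; rewrite ?Rinv_mult; ring).
  rewrite sumR_scal. unfold Rdiv. rewrite Rinv_mult. ring.
Qed.

Let form_at i := lyap_form (Ct i) (LCt i) (LVt i) (RVt i) (kC1 i) (kC3 i) (kV1 i) (kV2 i) (kV3 i).
Let bus_current (y : nat -> R) i := line_current N adj Rl (fun j => y (5 * j)%nat) i.

Definition cluster_lyap (e f : nat -> R) (y : nat -> R) : R :=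
  sumR N (fun i => form_at i (e i) (f i) (block y i) (block y i)).

Definition cluster_lyap_deriv (e f : nat -> R) (y : nat -> R) : R :=
  sumR N (fun i => 2 * form_at i (e i) (f i) (block y i) (rhs_at i (bus_current y i) (block y i))).

Lemma cluster_lyap_derivable e f x t : is_solution (5 * N) F x ->
  derivable_pt_lim (fun s => cluster_lyap e f (x s)) t (cluster_lyap_deriv e f (x t)).
Proof.
  intros Hx. apply derivable_pt_lim_sumR. intros i Hi.
  apply lyap_form_derivable. intros a Ha. unfold block.
  unfold bus_current. rewrite <- Fmat_mul_block by lia. apply Hx. lia.
Qed.

Hypothesis Hadj_sym : forall i j, adj i j = adj j i.
Hypothesis HRl : forall i j, adj i j = true -> Rl i j = Rl j i /\ 0 < Rl i j.
Hypothesis Hpos : forall i, (i < N)%nat ->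
  0 < Ct i /\ 0 < LCt i /\ 0 < RCt i /\ 0 < LVt i /\ 0 < RVt i /\ 0 < RL i.
Hypothesis Hgain : forall i, (i < N)%nat ->
  kC1 i < 1 /\ kC2 i < RCt i /\ 0 < kC3 i /\
  kV1 i < 1 /\ kV2 i < RVt i /\
  0 < kV3 i /\ kV3 i < (1 / LVt i) * (kV1 i - 1) * (kV2 i - RVt i).

(* The line currents enter only through the passive network; its indefinite part [- f q u]
   is absorbed by the [f^2 D q^2] margin of each block. *)
Lemma cluster_lyap_deriv_le e f eta y :
  (forall i, (i < N)%nat -> forall z,
     form_at i (e i) (f i) z (rhs_at i 0 z)
     + f i ^ 2 * conductance_degree N adj Rl i / 2 * z 4%nat ^ 2
     <= - eta * sqnorm 5 z) ->
  cluster_lyap_deriv e f y <= - (2 * eta) * sqnorm (5 * N) y.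
Proof.
  intros Hblock. unfold cluster_lyap_deriv.
  rewrite (sumR_ext _ _ (fun i => 2 * form_at i (e i) (f i) (block y i) (rhs_at i 0 (block y i))
           + 2 * ((y (5 * i)%nat - f i * y (5 * i + 4)%nat) * bus_current y i))).
  2:{ intros i Hi. destruct (Hpos i Hi) as (? & ? & ? & ? & ? & ?).
      destruct (Hgain i Hi) as (? & ? & ? & ? & ? & ? & ?).
      unfold form_at, rhs_at. rewrite lyap_form_rhs_input by assumption.
      unfold block. rewrite Nat.add_0_r. ring. }
  rewrite sumR_plus, !sumR_scal.
  pose proof (line_current_dissipative N adj Rl Hadj_sym HRl (fun j => y (5 * j)%nat)
                (fun j => f j * y (5 * j + 4)%nat)) as Hnet.
  cbv beta in Hnet.
  assert (Hsum : sumR N (fun i => form_at i (e i) (f i) (block y i) (rhs_at i 0 (block y i)))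
                 + sumR N (fun i =>
                     (f i * y (5 * i + 4)%nat) ^ 2 * conductance_degree N adj Rl i) / 2
                 <= - eta * sqnorm (5 * N) y).
  { rewrite sqnorm_blocks. unfold Rdiv. rewrite Rmult_comm, <- !sumR_scal, <- sumR_plus.
    apply sumR_le. intros i Hi. specialize (Hblock i Hi (block y i)).
    unfold block in *. lra. }
  unfold bus_current. lra.
Qed.

Lemma cluster_block_gains : exists e f : nat -> R, forall i, (i < N)%nat ->
  (exists m, 0 < m /\ forall y, m * sqnorm 5 y <= form_at i (e i) (f i) y y) /\
  (exists M, 0 < M /\ forall y, form_at i (e i) (f i) y y <= M * sqnorm 5 y) /\
  (exists eta, 0 < eta /\ forall y, form_at i (e i) (f i) y (rhs_at i 0 y)
     + f i ^ 2 * conductance_degree N adj Rl i / 2 * y 4%nat ^ 2 <= - eta * sqnorm 5 y).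
Proof.
  destruct (finite_choice (0, 0) N (fun i ef =>
    (exists m, 0 < m /\ forall y, m * sqnorm 5 y <= form_at i (fst ef) (snd ef) y y) /\
    (exists M, 0 < M /\ forall y, form_at i (fst ef) (snd ef) y y <= M * sqnorm 5 y) /\
    (exists eta, 0 < eta /\ forall y, form_at i (fst ef) (snd ef) y (rhs_at i 0 y)
       + snd ef ^ 2 * conductance_degree N adj Rl i / 2 * y 4%nat ^ 2 <= - eta * sqnorm 5 y)))
    as [ef Hef].
  - intros i Hi. destruct (Hpos i Hi) as (? & ? & ? & ? & ? & ?).
    destruct (Hgain i Hi) as (? & ? & ? & ? & ? & ? & ?).
    assert (Hdeg : 0 <= conductance_degree N adj Rl i).
    { apply sumR_nonneg. intros j _. destruct (adj i j) eqn:Eij; [|lra].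
      destruct (HRl i j Eij). left. apply Rdiv_lt_0_compat; lra. }
    destruct (block_lyapunov (Ct i) (LCt i) (RCt i) (LVt i) (RVt i) (RL i) (kC1 i) (kC2 i)
                (kC3 i) (kV1 i) (kV2 i) (kV3 i)) with (D := conductance_degree N adj Rl i)
      as (e & f & Hef); try assumption.
    exists (e, f). exact Hef.
  - exists (fun i => fst (ef i)), (fun i => snd (ef i)). exact Hef.
Qed.

Lemma cluster_quadratic_lyapunov :
  exists (W DW : (nat -> R) -> R) m M eta, 0 < m /\ 0 < M /\ 0 < eta /\
    (forall y, m * sqnorm (5 * N) y <= W y <= M * sqnorm (5 * N) y) /\
    (forall y, DW y <= - eta * sqnorm (5 * N) y) /\
    (forall x t, is_solution (5 * N) F x -> derivable_pt_lim (fun s => W (x s)) t (DW (x t))).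
Proof.
  destruct cluster_block_gains as (e & f & Hef).
  destruct (exists_uniform_lower N
              (fun i r => forall y, r * sqnorm 5 y <= form_at i (e i) (f i) y y))
    as [m [Hm Hlow]].
  { intros i r r' H [Hr' Hle] y. specialize (H y). pose proof (sqnorm_nonneg 5 y). nra. }
  { intros i Hi. exact (proj1 (Hef i Hi)). }
  destruct (exists_uniform_upper N
              (fun i r => forall y, form_at i (e i) (f i) y y <= r * sqnorm 5 y))
    as [M [HM Hup]].
  { intros i r r' H Hle y. specialize (H y). pose proof (sqnorm_nonneg 5 y). nra. }
  { intros i Hi. exact (proj1 (proj2 (Hef i Hi))). }
  destruct (exists_uniform_lower N (fun i r => forall y, form_at i (e i) (f i) y (rhs_at i 0 y)
              + f i ^ 2 * conductance_degree N adj Rl i / 2 * y 4%nat ^ 2 <= - r * sqnorm 5 y))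
    as [eta [Heta Hdecr]].
  { intros i r r' H [Hr' Hle] y. specialize (H y). pose proof (sqnorm_nonneg 5 y). nra. }
  { intros i Hi. exact (proj2 (proj2 (Hef i Hi))). }
  exists (cluster_lyap e f), (cluster_lyap_deriv e f), m, M, (2 * eta).
  split; [exact Hm|]. split; [exact HM|]. split; [lra|]. split; [|split].
  - intros y. unfold cluster_lyap. rewrite sqnorm_blocks, <- !sumR_scal.
    split; apply sumR_le; intros i Hi; [apply Hlow|apply Hup]; exact Hi.
  - intros y. now apply cluster_lyap_deriv_le.
  - intros x t Hx. now apply cluster_lyap_derivable.
Qed.

End Cluster.

Theorem theorem2 (N : nat) (adj : nat -> nat -> bool) (Rl : nat -> nat -> R)
  (Ct LCt RCt LVt RVt RL kC1 kC2 kC3 kV1 kV2 kV3 : nat -> R) :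
  (1 <= N)%nat ->
  is_undirected_graph N adj ->
  graph_connected N adj ->
  (forall i, (i < N)%nat ->
     0 < Ct i /\ 0 < LCt i /\ 0 < RCt i /\ 0 < LVt i /\ 0 < RVt i /\ 0 < RL i) ->
  (forall i j, adj i j = true -> Rl i j = Rl j i /\ 0 < Rl i j) ->
  (forall i, (i < N)%nat ->
     kC1 i < 1 /\ kC2 i < RCt i /\ 0 < kC3 i /\
     kV1 i < 1 /\ kV2 i < RVt i /\
     0 < kV3 i /\ kV3 i < (1 / LVt i) * (kV1 i - 1) * (kV2 i - RVt i)) ->
  origin_asymptotically_stable (5 * N)
    (Fmat N adj Rl Ct LCt RCt LVt RVt RL kC1 kC2 kC3 kV1 kV2 kV3).
Proof.
  intros _ (_ & Hadj_sym & Hadj_irrefl) _ Hpos HRl Hgain.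
  destruct (cluster_quadratic_lyapunov N adj Rl Ct LCt RCt LVt RVt RL kC1 kC2 kC3 kV1 kV2 kV3
              Hadj_irrefl Hadj_sym HRl Hpos Hgain)
    as (W & DW & m & M & eta & Hm & HM & Heta & HW & HDW & Hderiv).
  exact (asymptotically_stable_of_quadratic_lyapunov _ _ W DW m M eta Hm HM Heta HW HDW Hderiv).
Qed.
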